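(* Let $A\| B$ be a Frobenius extension such that $A_B$ is a generator, and let $E=\mathrm{End}(A_B)$ with $\lambda:A\to E$, $\lambda(a)(x)=ax$. If the extension $E\| A$ (via $\lambda$) is D2, then $A\| B$ is D2.
   Context: Algebras over a commutative ring $K$; an algebra extension $A\| B$ is a unit-preserving homomorphism $B\to A$. $A\| B$ is a Frobenius extension if $A_B$ is finitely generated projective and $A\cong\mathrm{Hom}(A_B,B_B)$ as $B$-$A$-bimodules. An extension $C\| D$ is right D2 if $C\otimes_DC$ is isomorphic as a $C$-$D$-bimodule to a direct summand of a finite direct sum $C^n$ of the natural bimodule, left D2 if the same holds as $D$-$C$-bimodules, and D2 if it is both left and right D2. *)

From HB Require Import structures.
From mathcomp Require Import all_boot all_order all_algebra.
Set Implicit Arguments. Unset Strict Implicit. Unset Printing Implicit Defensive.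
Import GRing.Theory.
Local Open Scope ring_scope.

Section Extension.
Variables (C D : pzRingType) (i : {rmorphism D -> C}).

Definition additive_fun (U V : zmodType) (h : U -> V) :=
  forall x y, h (x + y) = h x + h y.

Definition balanced (W : zmodType) (b : C -> C -> W) :=
  [/\ forall x x' y, b (x + x') y = b x y + b x' y,
      forall x y y', b x (y + y') = b x y + b x y' &
      forall x d y, b (x * i d) y = b x (i d * y)].

Definition is_tensor (T : zmodType) (t : C -> C -> T) :=
  balanced t /\
  forall (W : zmodType) (b : C -> C -> W), balanced b ->
    (exists h : T -> W, additive_fun h /\ forall x y, h (t x y) = b x y) /\
    (forall h h' : T -> W, additive_fun h -> additive_fun h' ->
       (forall x y, h (t x y) = h' (t x y)) -> forall s, h s = h' s).

(* L : T -> T is the action  s |-> a . s . b  on the tensor product, i.e.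
   the additive map with  x (x) y |-> a x (x) y b  (unique by universality) *)
Definition tensor_act (T : zmodType) (t : C -> C -> T) (a b : C) (L : T -> T) :=
  additive_fun L /\ forall x y, L (t x y) = t (a * x) (y * b).

(* C (x)_D C is isomorphic, as a bimodule whose left scalars act through
   [lft] and right scalars through [rgt], to a direct summand of C^n with its
   natural bimodule structure: there are bimodule maps
   u : C (x)_D C -> C^n,  v : C^n -> C (x)_D C  with  v o u = id. *)
Definition summand_of_power (T : zmodType) (t : C -> C -> T)
    (S1 S2 : pzRingType) (lft : S1 -> C) (rgt : S2 -> C) :=
  exists n : nat, exists (u : T -> {ffun 'I_n -> C}) (v : {ffun 'I_n -> C} -> T),
    [/\ additive_fun u, additive_fun v, (forall s, v (u s) = s) &
        forall (a : S1) (b : S2) (L : T -> T), tensor_act t (lft a) (rgt b) L ->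
          (forall s, u (L s) = [ffun j => lft a * u s j * rgt b]) /\
          (forall w : {ffun 'I_n -> C}, v [ffun j => lft a * w j * rgt b] = L (v w))].

Definition right_D2 :=
  forall (T : zmodType) (t : C -> C -> T), is_tensor t ->
    summand_of_power t (@id C) i.

Definition left_D2 :=
  forall (T : zmodType) (t : C -> C -> T), is_tensor t ->
    summand_of_power t i (@id C).

Definition D2 := left_D2 /\ right_D2.

End Extension.

Section RightModules.
Variables (A B : pzRingType) (f : {rmorphism B -> A}).

Definition rlin_to_B (phi : A -> B) :=
  additive_fun phi /\ forall x b, phi (x * f b) = phi x * b.

Definition rlin_endo (g : A -> A) :=
  additive_fun g /\ forall x b, g (x * f b) = g x * f b.

Definition fg_projective :=
  exists n : nat, exists (p : A -> {ffun 'I_n -> B}) (q : {ffun 'I_n -> B} -> A),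
    [/\ additive_fun p, additive_fun q,
        forall a b, p (a * f b) = [ffun j => p a j * b],
        forall (w : {ffun 'I_n -> B}) b, q [ffun j => w j * b] = q w * f b &
        forall a, q (p a) = a].

Definition generator :=
  exists n : nat, exists (p : B -> {ffun 'I_n -> A}) (q : {ffun 'I_n -> A} -> B),
    [/\ additive_fun p, additive_fun q,
        forall c b, p (c * b) = [ffun j => p c j * f b],
        forall (w : {ffun 'I_n -> A}) b, q [ffun j => w j * f b] = q w * b &
        forall c, q (p c) = c].

(* A is isomorphic to Hom(A_B, B_B) as B-A-bimodules, where
   (b . phi . a)(x) = b * phi (a * x). *)
Definition frob_iso :=
  exists Phi : A -> A -> B,
    [/\ forall a, rlin_to_B (Phi a),
        forall a a' x, Phi (a + a') x = Phi a x + Phi a' x,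
        forall b a a' x, Phi (f b * a * a') x = b * Phi a (a' * x),
        forall a a', (forall x, Phi a x = Phi a' x) -> a = a' &
        forall phi, rlin_to_B phi -> exists a, forall x, Phi a x = phi x].

Definition Frobenius := fg_projective /\ frob_iso.

(* (E, theta) is (a ring isomorphic to) End(A_B): theta is a ring
   isomorphism from E onto the ring of right B-linear endomorphisms of A
   (multiplication = composition). *)
Definition is_End (E : pzRingType) (theta : E -> A -> A) :=
  [/\ forall e, rlin_endo (theta e),
      (forall e e' x, theta (e + e') x = theta e x + theta e' x),
      (forall e e' x, theta (e * e') x = theta e (theta e' x)) /\
      (forall x, theta 1 x = x),
      forall e e', (forall x, theta e x = theta e' x) -> e = e' &
      forall g, rlin_endo g -> exists e, forall x, theta e x = g x].

End RightModules.

(* Since A_B is a finitely generated projective generator, E = End(A_B) is Morita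
   equivalent to B; on left modules the equivalence is M |-> Hom(A_B, B_B) (x)_E M,
   and Hom(A_B, B_B) ~ A by the Frobenius form Ef.  Frobenius also identifies E with
   A (x)_B A, via x (x) y |-> (z |-> x * f (Ef (y * z))).  The equivalence sends the
   E-A-bimodules E (x)_A E and E to A (x)_B A and A, so a splitting E (x)_A E | E^m
   (right D2 of E|A) becomes a splitting A (x)_B A | A^m of B-A-bimodules (left D2 of
   A|B); on right modules, M |-> M (x)_E A turns left D2 of E|A into right D2 of A|B.
   Concretely, the equivalence is implemented by a dual basis of A_B and by elements
   a_c, r_c with \sum_c Ef (r_c * a_c) = 1, which exist since A_B is a generator. *)

From HB Require Import structures.
From mathcomp Require Import all_boot all_order all_algebra.
Set Implicit Arguments. Unset Strict Implicit. Unset Printing Implicit Defensive.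
From Stdlib Require Import ClassicalEpsilon.
Import GRing.Theory.
Local Open Scope ring_scope.

Section AdditiveFun.
Variables (U V : zmodType) (h : U -> V).
Hypothesis hD : additive_fun h.

Lemma additive_fun0 : h 0 = 0.
Proof. by apply: (addrI (h 0)); rewrite -hD !addr0. Qed.

Lemma additive_funN x : h (- x) = - h x.
Proof. by apply: (addrI (h x)); rewrite -hD !subrr additive_fun0. Qed.

Lemma additive_funB x y : h (x - y) = h x - h y.
Proof. by rewrite hD additive_funN. Qed.

Lemma additive_fun_sum (I : Type) (r : seq I) (P : pred I) (F : I -> U) :
  h (\sum_(i <- r | P i) F i) = \sum_(i <- r | P i) h (F i).
Proof. exact: (big_morph h hD additive_fun0). Qed.

End AdditiveFun.

Record addEndo (V : zmodType) :=
  AddEndo { endo_fun :> V -> V; endo_additive : additive_fun endo_fun }.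

Section FixedPoints.
Variables (V : zmodType) (P : addEndo V).

Definition fixed : {pred V} := fun w => P w == w.

Lemma fixed_zmod_closed : zmod_closed fixed.
Proof.
split; first by rewrite /in_mem /= /fixed (additive_fun0 (endo_additive P)).
move=> x y; rewrite /in_mem /= /fixed => /eqP Px /eqP Py.
by rewrite (additive_funB (endo_additive P)) Px Py.
Qed.

HB.instance Definition _ := GRing.isZmodClosed.Build V fixed fixed_zmod_closed.
Record fixed_pts : predArgType := FixedPt { fixval : V; fixvalP : fixval \in fixed }.
HB.instance Definition _ := [isSub for fixval].
HB.instance Definition _ := [Choice of fixed_pts by <:].
HB.instance Definition _ := [SubChoice_isSubZmodule of fixed_pts by <:].

Lemma fixval_inj : injective fixval. Proof. exact: val_inj. Qed.

Lemma fixval_fixed (s : fixed_pts) : P (fixval s) = fixval s.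
Proof. exact/eqP/fixvalP. Qed.

Lemma fixval_sum (I : Type) (r : seq I) (Q : pred I) (F : I -> fixed_pts) :
  fixval (\sum_(i <- r | Q i) F i) = \sum_(i <- r | Q i) fixval (F i).
Proof. by apply: additive_fun_sum. Qed.

End FixedPoints.

Section FrobeniusDescent.
Variables (A B : pzRingType) (f : {rmorphism B -> A}).

(* The Frobenius homomorphism: a |-> Ef (a * _) is the isomorphism A ~ Hom(A_B, B_B). *)
Variable Ef : A -> B.
Hypothesis Ef_additive : additive_fun Ef.
Hypothesis EfMf : forall x b, Ef (x * f b) = Ef x * b.
Hypothesis EffM : forall x b, Ef (f b * x) = b * Ef x.
Hypothesis Ef_nondeg : forall a a', (forall z, Ef (a * z) = Ef (a' * z)) -> a = a'.

Variables (n : nat) (xs ys : 'I_n -> A).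
Hypothesis dual_basis_l : forall z, \sum_i xs i * f (Ef (ys i * z)) = z.

Lemma Ef_sum (I : Type) (r : seq I) (P : pred I) (F : I -> A) :
  Ef (\sum_(i <- r | P i) F i) = \sum_(i <- r | P i) Ef (F i).
Proof. exact: additive_fun_sum. Qed.

Lemma dual_basis_r y : \sum_i f (Ef (y * xs i)) * ys i = y.
Proof.
apply: Ef_nondeg => z; rewrite mulr_suml Ef_sum.
rewrite -{2}(dual_basis_l z) mulr_sumr Ef_sum; apply: eq_bigr => i _.
by rewrite -mulrA EffM mulrA EfMf.
Qed.

Variables (E : pzRingType) (theta : E -> A -> A) (lambda : {rmorphism A -> E}).
Hypothesis theta_additive : forall e, additive_fun (theta e).
Hypothesis theta_rlin : forall e x b, theta e (x * f b) = theta e x * f b.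
Hypothesis thetaD : forall e e' x, theta (e + e') x = theta e x + theta e' x.
Hypothesis thetaM : forall e e' x, theta (e * e') x = theta e (theta e' x).
Hypothesis theta_inj : forall e e', (forall x, theta e x = theta e' x) -> e = e'.
Hypothesis theta_lambda : forall a x, theta (lambda a) x = a * x.

Variable tau : A -> E.
Hypothesis theta_tau : forall y z, theta (tau y) z = f (Ef (y * z)).

Lemma theta_suml x (I : Type) (r : seq I) (P : pred I) (F : I -> E) :
  theta (\sum_(i <- r | P i) F i) x = \sum_(i <- r | P i) theta (F i) x.
Proof. by apply: (additive_fun_sum (h := theta^~ x)) => e e'; apply: thetaD. Qed.

Lemma theta_sumr e (I : Type) (r : seq I) (P : pred I) (F : I -> A) :
  theta e (\sum_(i <- r | P i) F i) = \sum_(i <- r | P i) theta e (F i).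
Proof. exact: additive_fun_sum. Qed.

Lemma theta1 x : theta 1 x = x.
Proof. by rewrite -(rmorph1 lambda) theta_lambda mul1r. Qed.

(* The isomorphism A (x)_B A ~ E; [tens_expansion] is its surjectivity. *)
Definition tens x y := lambda x * tau y.

Lemma theta_tens x y z : theta (tens x y) z = x * f (Ef (y * z)).
Proof. by rewrite thetaM theta_lambda theta_tau. Qed.

Lemma tens_expansion e : e = \sum_i tens (theta e (xs i)) (ys i).
Proof.
apply: theta_inj => z; rewrite theta_suml.
under eq_bigr do rewrite theta_tens -theta_rlin.
by rewrite -theta_sumr dual_basis_l.
Qed.

Lemma tens_bal x y b : tens (x * f b) y = tens x (f b * y).
Proof. by apply: theta_inj => z; rewrite !theta_tens -!mulrA EffM rmorphM. Qed.

Lemma tensDl x x' y : tens (x + x') y = tens x y + tens x' y.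
Proof. by rewrite /tens rmorphD mulrDl. Qed.

Lemma tensDr x y y' : tens x (y + y') = tens x y + tens x y'.
Proof.
by apply: theta_inj => z; rewrite thetaD !theta_tens mulrDl Ef_additive rmorphD mulrDr.
Qed.

Lemma tens_suml y (I : Type) (r : seq I) (P : pred I) (F : I -> A) :
  tens (\sum_(i <- r | P i) F i) y = \sum_(i <- r | P i) tens (F i) y.
Proof. by apply: (additive_fun_sum (h := tens^~ y)) => ? ?; apply: tensDl. Qed.

Lemma tens_sumr x (I : Type) (r : seq I) (P : pred I) (F : I -> A) :
  tens x (\sum_(i <- r | P i) F i) = \sum_(i <- r | P i) tens x (F i).
Proof. by apply: (additive_fun_sum (h := tens x)) => ? ?; apply: tensDr. Qed.

Lemma tens_mul_lambda x y a : tens x y * lambda a = tens x (y * a).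
Proof. by apply: theta_inj => z; rewrite thetaM !theta_tens theta_lambda mulrA. Qed.

Lemma tens_mul x y x' y' : tens x y * tens x' y' = tens (x * f (Ef (y * x'))) y'.
Proof.
by apply: theta_inj => z; rewrite thetaM !theta_tens [y * _]mulrA EfMf rmorphM mulrA.
Qed.

Lemma mul_tens e x y : e * tens x y = tens (theta e x) y.
Proof. by apply: theta_inj => z; rewrite thetaM !theta_tens theta_rlin. Qed.

Lemma lambda_mul_tens a x y : lambda a * tens x y = tens (a * x) y.
Proof. by rewrite /tens mulrA rmorphM. Qed.

Lemma tau_tens y : tau y = tens 1 y.
Proof. by rewrite /tens rmorph1 mul1r. Qed.

(* The right E-module structure of A ~ Hom(A_B, B_B), by precomposition. *)
Definition ract r e := \sum_i f (Ef (r * theta e (xs i))) * ys i.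

Lemma Ef_ract r e z : Ef (ract r e * z) = Ef (r * theta e z).
Proof.
rewrite mulr_suml Ef_sum -{2}(dual_basis_l z) theta_sumr mulr_sumr Ef_sum.
by apply: eq_bigr => i _; rewrite -mulrA EffM theta_rlin mulrA EfMf.
Qed.

Lemma ract_additive r : additive_fun (ract r).
Proof.
move=> e e'; apply: Ef_nondeg => z.
by rewrite mulrDl Ef_additive !Ef_ract thetaD mulrDr Ef_additive.
Qed.

Lemma ract_tens_mul r x y e : ract r (tens x y * e) = f (Ef (r * x)) * ract y e.
Proof.
apply: Ef_nondeg => z.
by rewrite Ef_ract thetaM theta_tens mulrA EfMf -mulrA EffM Ef_ract.
Qed.

Lemma ract_mul_lambda r e a : ract r (e * lambda a) = ract r e * a.
Proof. by apply: Ef_nondeg => z; rewrite Ef_ract thetaM theta_lambda -mulrA Ef_ract. Qed.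

Lemma ract_tens1 r a : ract r (tens a 1) = f (Ef (r * a)).
Proof.
have ract11 : ract 1 1 = 1 by apply: Ef_nondeg => z; rewrite Ef_ract theta1.
by rewrite -[tens a 1]mulr1 ract_tens_mul ract11 mulr1.
Qed.

Lemma tens_ract a r e : tens a (ract r e) = tens a r * e.
Proof. by apply: theta_inj => z; rewrite thetaM !theta_tens Ef_ract. Qed.

(* E (x)_A E is realized inside E^n: x (x) y |-> (x * lambda (theta y (xs j)))_j,
   an embedding with retraction s |-> \sum_j s j (x) tau (ys j) (see [EtE_expansion]).
   [act e1 e2] is the action s |-> e1 * s * e2 transported to E^n, and the image of
   the embedding is the set of fixed points of [act 1 1]. *)
Local Notation Vn := {ffun 'I_n -> E}.

Definition act (e1 e2 : E) (w : Vn) : Vn :=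
  [ffun j => \sum_i e1 * w i * lambda (f (Ef (ys i * theta e2 (xs j))))].

Definition emb x y : Vn := [ffun j => x * lambda (theta y (xs j))].

Lemma act_additive e1 e2 : additive_fun (act e1 e2).
Proof.
move=> w w'; apply/ffunP => j; rewrite !ffunE -big_split /=.
by apply: eq_bigr => i _; rewrite ffunE mulrDr mulrDl.
Qed.

Lemma act_emb e1 e2 x y : act e1 e2 (emb x y) = emb (e1 * x) (y * e2).
Proof.
apply/ffunP => j; rewrite !ffunE.
under eq_bigr do rewrite ffunE -!mulrA -rmorphM mulrA.
rewrite -mulr_sumr -rmorph_sum.
under eq_bigr do rewrite -theta_rlin.
by rewrite -theta_sumr dual_basis_l thetaM.
Qed.

Definition proj : addEndo Vn := AddEndo (act_additive 1 1).

Lemma proj_act e1 e2 w : proj (act e1 e2 w) = act e1 e2 w.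
Proof.
apply/ffunP => j; rewrite /= !ffunE.
under eq_bigr do rewrite /act ffunE mul1r mulr_suml.
rewrite exchange_big /=; apply: eq_bigr => i _.
under eq_bigr do rewrite theta1 -mulrA -!rmorphM.
rewrite -mulr_sumr -!rmorph_sum; congr (_ * lambda _).
under eq_bigr do rewrite -EfMf -mulrA -theta_rlin.
by rewrite -Ef_sum -mulr_sumr -theta_sumr dual_basis_l.
Qed.

Lemma actP e1 e2 w : act e1 e2 w \in fixed proj.
Proof. by rewrite /in_mem /= /fixed proj_act. Qed.

Lemma embP x y : emb x y \in fixed proj.
Proof. by have := actP 1 1 (emb x y); rewrite act_emb mul1r mulr1. Qed.

Definition EtE := fixed_pts proj.
Definition etens x y : EtE := FixedPt (embP x y).
Definition etens_act e1 e2 (s : EtE) : EtE := FixedPt (actP e1 e2 (fixval s)).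

Lemma EtE_expansion (s : EtE) : s = \sum_i etens (fixval s i) (tau (ys i)).
Proof.
apply: fixval_inj; rewrite fixval_sum -{1}(fixval_fixed s) /=.
apply/ffunP => j; rewrite !ffunE sum_ffunE; apply: eq_bigr => i _.
by rewrite !ffunE theta_tau mul1r theta1.
Qed.

Lemma etens_act_tensor_act e1 e2 : tensor_act etens e1 e2 (etens_act e1 e2).
Proof.
split=> [s s' | x y]; apply: fixval_inj; first by rewrite /= act_additive.
by rewrite /= act_emb.
Qed.

Lemma etens_act_additive e1 e2 : additive_fun (etens_act e1 e2).
Proof. by case: (etens_act_tensor_act e1 e2). Qed.

Lemma etens_act_etens e1 e2 x y : etens_act e1 e2 (etens x y) = etens (e1 * x) (y * e2).
Proof. by case: (etens_act_tensor_act e1 e2). Qed.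

Lemma etens_balanced : balanced lambda etens.
Proof.
split=> [x x' y | x y y' | x d y]; apply: fixval_inj; apply/ffunP => j;
  rewrite /= !ffunE.
- by rewrite mulrDl.
- by rewrite thetaD rmorphD mulrDr.
- by rewrite thetaM theta_lambda rmorphM mulrA.
Qed.

Lemma etens_is_tensor : is_tensor lambda etens.
Proof.
split=> [|W b [bDl bDr bbal]]; first exact: etens_balanced.
split.
  exists (fun s : EtE => \sum_i b (fixval s i) (tau (ys i))); split.
    move=> s s'; rewrite -big_split /=; apply: eq_bigr => i _.
    by rewrite ffunE bDl.
  move=> x y /=; under eq_bigr do rewrite ffunE bbal.
  rewrite -(additive_fun_sum (bDr x)) {2}(tens_expansion y).
  by congr (b x _); apply: eq_bigr.
move=> h h' hD h'D eqh s; rewrite (EtE_expansion s).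
rewrite (additive_fun_sum hD) (additive_fun_sum h'D).
by apply: eq_bigr => i _; apply: eqh.
Qed.

Lemma etensDl x x' y : etens (x + x') y = etens x y + etens x' y.
Proof. by case: etens_balanced. Qed.

Lemma etensDr x y y' : etens x (y + y') = etens x y + etens x y'.
Proof. by case: etens_balanced. Qed.

Lemma etens_bal x a y : etens (x * lambda a) y = etens x (lambda a * y).
Proof. by case: etens_balanced. Qed.

Lemma etens_suml y (I : Type) (r : seq I) (P : pred I) (F : I -> E) :
  etens (\sum_(i <- r | P i) F i) y = \sum_(i <- r | P i) etens (F i) y.
Proof. by apply: (additive_fun_sum (h := etens^~ y)) => ? ?; apply: etensDl. Qed.

Lemma etens_sumr x (I : Type) (r : seq I) (P : pred I) (F : I -> E) :
  etens x (\sum_(i <- r | P i) F i) = \sum_(i <- r | P i) etens x (F i).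
Proof. by apply: (additive_fun_sum (h := etens x)) => ? ?; apply: etensDr. Qed.

Lemma tens_balanced : balanced f tens.
Proof. by split; [apply: tensDl | apply: tensDr | move=> x d y; rewrite tens_bal]. Qed.

Lemma tensor_iso_tens (T : zmodType) (t : A -> A -> T) : is_tensor f t ->
  exists (g : E -> T) (h : T -> E),
    [/\ additive_fun g, additive_fun h, (forall e, h (g e) = e),
        (forall s, g (h s) = s) &
        forall a b L, tensor_act t a b L -> forall s, h (L s) = lambda a * h s * lambda b].
Proof.
move=> [[tDl tDr tbal] tuniv].
have [[h [hD htens]] huniq] := tuniv E tens tens_balanced.
have tuniq := (tuniv T t (And3 tDl tDr tbal)).2.
pose g (e : E) : T := \sum_i t (theta e (xs i)) (ys i).
have gD : additive_fun g.
  by move=> e e'; rewrite /g -big_split /=; apply: eq_bigr => i _; rewrite thetaD tDl.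
have gtens x y : g (tens x y) = t x y.
  rewrite /g; under eq_bigr do rewrite theta_tens tbal.
  by rewrite -(additive_fun_sum (tDr x)) dual_basis_r.
have ghK s : g (h s) = s.
  apply: (tuniq (fun s => g (h s)) id) => // [s1 s2|x y]; first by rewrite hD gD.
  by rewrite htens gtens.
exists g, h; split=> // [e | a b L [LD Lt] s].
  by rewrite (additive_fun_sum hD) {2}(tens_expansion e); apply: eq_bigr => i _.
apply: (huniq (h \o L) (fun s => lambda a * h s * lambda b)) => [s' s''|s' s''|x y] /=.
- by rewrite LD hD.
- by rewrite hD mulrDr mulrDl.
- by rewrite Lt !htens lambda_mul_tens tens_mul_lambda.
Qed.

Lemma summand_of_power_transfer (S1 S2 : pzRingType) (lft : S1 -> A) (rgt : S2 -> A)
    m (u : E -> {ffun 'I_m -> A}) (v : {ffun 'I_m -> A} -> E) :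
  additive_fun u -> additive_fun v -> (forall e, v (u e) = e) ->
  (forall a b e, u (lambda (lft a) * e * lambda (rgt b)) =
                 [ffun j => lft a * u e j * rgt b]) ->
  (forall a b (w : {ffun 'I_m -> A}),
     v [ffun j => lft a * w j * rgt b] = lambda (lft a) * v w * lambda (rgt b)) ->
  forall (T : zmodType) (t : A -> A -> T), is_tensor f t -> summand_of_power t lft rgt.
Proof.
move=> uD vD vuK u_bimod v_bimod T t /tensor_iso_tens[g [h [gD hD hgK ghK hL]]].
exists m, (fun s => u (h s)), (fun w => g (v w)); split=> [s s'|w w'|s|a b L /hL Lh].
- by rewrite hD uD.
- by rewrite vD gD.
- by rewrite vuK ghK.
split=> [s|w]; first by rewrite Lh u_bimod.
by rewrite v_bimod -{1}(hgK (v w)) -Lh ghK.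
Qed.

Variables (k : nat) (as_ rs : 'I_k -> A).
Hypothesis gen_unit : \sum_c Ef (rs c * as_ c) = 1.

Lemma gen_unit_r b : \sum_c Ef (rs c * (as_ c * f b)) = b.
Proof. by under eq_bigr do rewrite mulrA EfMf; rewrite -mulr_suml gen_unit mul1r. Qed.

Lemma gen_unit_fr b : \sum_c f (Ef (rs c * (as_ c * f b))) = f b.
Proof. by rewrite -rmorph_sum gen_unit_r. Qed.

Lemma gen_unit_f : \sum_c f (Ef (rs c * as_ c)) = 1.
Proof. by rewrite -rmorph_sum gen_unit rmorph1. Qed.

Definition lift_l e (c : 'I_k) : EtE := etens (tens (as_ c) 1) e.
Definition drop_l r (s : EtE) : E := \sum_j lambda (ract r (fixval s j)) * tau (ys j).

Lemma drop_l_additive r : additive_fun (drop_l r).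
Proof.
move=> s s'; rewrite /drop_l -big_split /=; apply: eq_bigr => j _.
by rewrite ffunE ract_additive rmorphD mulrDl.
Qed.

Lemma drop_l_etens r x y : drop_l r (etens x y) = lambda (ract r x) * y.
Proof.
rewrite /drop_l {2}(tens_expansion y) mulr_sumr; apply: eq_bigr => j _.
by rewrite /= ffunE ract_mul_lambda rmorphM /tens mulrA.
Qed.

Lemma drop_l_act r x d e2 s :
  drop_l r (etens_act (tens x (rs d)) e2 s) =
  lambda (f (Ef (r * x))) * drop_l (rs d) s * e2.
Proof.
rewrite {1}(EtE_expansion s) (additive_fun_sum (etens_act_additive _ _)).
rewrite (additive_fun_sum (drop_l_additive r)) [drop_l (rs d) s]/drop_l.
rewrite mulr_sumr mulr_suml; apply: eq_bigr => j _.
by rewrite etens_act_etens drop_l_etens ract_tens_mul rmorphM !mulrA.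
Qed.

Lemma lift_l_expansion e d :
  lift_l e d = \sum_c etens_act (tens (as_ d) (rs c)) (lambda 1) (lift_l e c).
Proof.
under eq_bigr do rewrite /lift_l etens_act_etens tens_mul rmorph1 mulr1.
by rewrite -etens_suml -tens_suml -mulr_sumr gen_unit_f mulr1.
Qed.

Section LeftD2.
Variables (m : nat) (u : EtE -> {ffun 'I_m -> E}) (v : {ffun 'I_m -> E} -> EtE).
Hypotheses (uD : additive_fun u) (vD : additive_fun v) (vuK : forall s, v (u s) = s).
Hypothesis uv_bimod : forall (e1 : E) (a : A) (L : EtE -> EtE),
  tensor_act etens e1 (lambda a) L ->
  (forall s, u (L s) = [ffun j => e1 * u s j * lambda a]) /\
  (forall w : {ffun 'I_m -> E}, v [ffun j => e1 * w j * lambda a] = L (v w)).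

Lemma u_act_l e1 a s : u (etens_act e1 (lambda a) s) = [ffun j => e1 * u s j * lambda a].
Proof. exact: (uv_bimod (etens_act_tensor_act _ _)).1. Qed.

Lemma v_act_l e1 a (w : {ffun 'I_m -> E}) : v [ffun j => e1 * w j * lambda a] = etens_act e1 (lambda a) (v w).
Proof. exact: (uv_bimod (etens_act_tensor_act _ _)).2. Qed.

(* u and v transported along M |-> Hom(A_B, B_B) (x)_E M, which [ract] implements
   on E and [drop_l] on E (x)_A E. *)
Definition sect_l (e : E) : {ffun 'I_m -> A} :=
  [ffun j => \sum_c ract (rs c) (u (lift_l e c) j)].
Definition retr_l (w : {ffun 'I_m -> A}) : E :=
  \sum_c drop_l (rs c) (v [ffun j => tens (as_ c) (w j)]).

Lemma sect_l_additive : additive_fun sect_l.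
Proof.
move=> e e'; apply/ffunP => j; rewrite !ffunE -big_split /=; apply: eq_bigr => c _.
by rewrite /lift_l etensDr uD ffunE ract_additive.
Qed.

Lemma retr_l_additive : additive_fun retr_l.
Proof.
move=> w w'; rewrite /retr_l -big_split /=; apply: eq_bigr => c _.
rewrite -drop_l_additive -vD; congr (drop_l _ (v _)); apply/ffunP => j.
by rewrite !ffunE tensDr.
Qed.

Lemma retr_sect_l e : retr_l (sect_l e) = e.
Proof.
have tens_sect d : [ffun j => tens (as_ d) (sect_l e j)] = u (lift_l e d).
  rewrite lift_l_expansion (additive_fun_sum uD); apply/ffunP => j.
  rewrite !ffunE sum_ffunE tens_sumr; apply: eq_bigr => c _.
  by rewrite u_act_l ffunE rmorph1 mulr1 tens_ract.
rewrite /retr_l; under eq_bigr do rewrite tens_sect vuK /lift_l drop_l_etens ract_tens1.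
by rewrite -mulr_suml -rmorph_sum gen_unit_f rmorph1 mul1r.
Qed.

Lemma sect_l_bimod b a e :
  sect_l (lambda (f b) * e * lambda a) = [ffun j => f b * sect_l e j * a].
Proof.
have lift_bimod c : lift_l (lambda (f b) * e * lambda a) c =
    \sum_d etens_act (tens (as_ c * f b) (rs d)) (lambda a) (lift_l e d).
  under eq_bigr do rewrite /lift_l etens_act_etens tens_mul.
  rewrite -etens_suml -tens_suml -mulr_sumr gen_unit_f mulr1 /lift_l -!mulrA -etens_bal.
  by rewrite tens_mul_lambda tens_bal mul1r mulr1.
apply/ffunP => j; rewrite !ffunE.
under eq_bigr do rewrite lift_bimod (additive_fun_sum uD) sum_ffunE
  (additive_fun_sum (ract_additive _)).
under eq_bigr do under eq_bigr do rewrite u_act_l ffunE ract_mul_lambda ract_tens_mul.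
rewrite exchange_big /= mulr_sumr mulr_suml; apply: eq_bigr => d _.
by rewrite -!mulr_suml gen_unit_fr.
Qed.

Lemma retr_l_bimod b a (w : {ffun 'I_m -> A}) :
  retr_l [ffun j => f b * w j * a] = lambda (f b) * retr_l w * lambda a.
Proof.
have tens_bimod c : [ffun j => tens (as_ c) ([ffun j => f b * w j * a] j)] =
    \sum_d [ffun j => tens (as_ c * f b) (rs d) * [ffun j => tens (as_ d) (w j)] j
                      * lambda a].
  apply/ffunP => j; rewrite sum_ffunE !ffunE.
  under eq_bigr do rewrite !ffunE tens_mul.
  by rewrite -mulr_suml -tens_suml -mulr_sumr gen_unit_f mulr1 tens_mul_lambda tens_bal mulrA.
rewrite /retr_l; under eq_bigr do rewrite tens_bimod (additive_fun_sum vD)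
  (additive_fun_sum (drop_l_additive _)).
under eq_bigr do under eq_bigr do rewrite v_act_l drop_l_act.
rewrite exchange_big /= mulr_sumr mulr_suml; apply: eq_bigr => d _.
by rewrite -!mulr_suml -rmorph_sum gen_unit_fr.
Qed.

End LeftD2.

Definition lift_r e (c : 'I_k) : EtE := etens e (tau (rs c)).
Definition drop_r z (s : EtE) : E := \sum_j fixval s j * lambda (f (Ef (ys j * z))).

Lemma drop_r_additive z : additive_fun (drop_r z).
Proof.
move=> s s'; rewrite /drop_r -big_split /=; apply: eq_bigr => j _.
by rewrite ffunE mulrDl.
Qed.

Lemma drop_r_additive_l s : additive_fun (drop_r^~ s).
Proof.
move=> z z'; rewrite /drop_r -big_split /=; apply: eq_bigr => j _.
by rewrite mulrDr Ef_additive !rmorphD mulrDr.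
Qed.

Lemma drop_rMf z b s : drop_r (z * f b) s = drop_r z s * lambda (f b).
Proof.
rewrite /drop_r mulr_suml; apply: eq_bigr => j _.
by rewrite mulrA EfMf !rmorphM mulrA.
Qed.

Lemma drop_r_etens z x y : drop_r z (etens x y) = x * lambda (theta y z).
Proof.
rewrite /drop_r /=; under eq_bigr do rewrite ffunE -mulrA -rmorphM -theta_rlin.
by rewrite -mulr_sumr -rmorph_sum -theta_sumr dual_basis_l.
Qed.

Lemma drop_r_act z e1 e2 s : drop_r z (etens_act e1 e2 s) = e1 * drop_r (theta e2 z) s.
Proof.
rewrite {1}(EtE_expansion s) (additive_fun_sum (etens_act_additive _ _)).
rewrite (additive_fun_sum (drop_r_additive z)) [drop_r _ s]/drop_r mulr_sumr.
apply: eq_bigr => j _.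
by rewrite etens_act_etens drop_r_etens thetaM theta_tau mulrA.
Qed.

Lemma lift_r_expansion e d :
  lift_r e d = \sum_c etens_act (lambda 1) (tens (as_ c) (rs d)) (lift_r e c).
Proof.
under eq_bigr do rewrite /lift_r etens_act_etens tau_tens tens_mul rmorph1 !mul1r.
by rewrite -etens_sumr -tens_suml gen_unit_f /lift_r tau_tens.
Qed.

Section RightD2.
Variables (m : nat) (u : EtE -> {ffun 'I_m -> E}) (v : {ffun 'I_m -> E} -> EtE).
Hypotheses (uD : additive_fun u) (vD : additive_fun v) (vuK : forall s, v (u s) = s).
Hypothesis uv_bimod : forall (a : A) (e2 : E) (L : EtE -> EtE),
  tensor_act etens (lambda a) e2 L ->
  (forall s, u (L s) = [ffun j => lambda a * u s j * e2]) /\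
  (forall w : {ffun 'I_m -> E}, v [ffun j => lambda a * w j * e2] = L (v w)).

Lemma u_act_r a e2 s : u (etens_act (lambda a) e2 s) = [ffun j => lambda a * u s j * e2].
Proof. exact: (uv_bimod (etens_act_tensor_act _ _)).1. Qed.

Lemma v_act_r a e2 (w : {ffun 'I_m -> E}) :
  v [ffun j => lambda a * w j * e2] = etens_act (lambda a) e2 (v w).
Proof. exact: (uv_bimod (etens_act_tensor_act _ _)).2. Qed.

(* u and v transported along M |-> M (x)_E A, which [theta] implements on E and
   [drop_r] on E (x)_A E. *)
Definition sect_r (e : E) : {ffun 'I_m -> A} :=
  [ffun j => \sum_c theta (u (lift_r e c) j) (as_ c)].
Definition retr_r (w : {ffun 'I_m -> A}) : E :=
  \sum_c drop_r (as_ c) (v [ffun j => tens (w j) (rs c)]).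

Lemma sect_r_additive : additive_fun sect_r.
Proof.
move=> e e'; apply/ffunP => j; rewrite !ffunE -big_split /=; apply: eq_bigr => c _.
by rewrite /lift_r etensDl uD ffunE thetaD.
Qed.

Lemma retr_r_additive : additive_fun retr_r.
Proof.
move=> w w'; rewrite /retr_r -big_split /=; apply: eq_bigr => c _.
rewrite -drop_r_additive -vD; congr (drop_r _ (v _)); apply/ffunP => j.
by rewrite !ffunE tensDl.
Qed.

Lemma retr_sect_r e : retr_r (sect_r e) = e.
Proof.
have tens_sect d : [ffun j => tens (sect_r e j) (rs d)] = u (lift_r e d).
  rewrite lift_r_expansion (additive_fun_sum uD); apply/ffunP => j.
  rewrite !ffunE sum_ffunE tens_suml; apply: eq_bigr => c _.
  by rewrite u_act_r ffunE rmorph1 mul1r mul_tens.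
rewrite /retr_r; under eq_bigr do rewrite tens_sect vuK /lift_r drop_r_etens theta_tau.
by rewrite -mulr_sumr -rmorph_sum gen_unit_f rmorph1 mulr1.
Qed.

Lemma sect_r_bimod a b e :
  sect_r (lambda a * e * lambda (f b)) = [ffun j => a * sect_r e j * f b].
Proof.
have lift_bimod c : lift_r (lambda a * e * lambda (f b)) c =
    \sum_d etens_act (lambda a) (tens (as_ d * f b) (rs c)) (lift_r e d).
  under eq_bigr do rewrite /lift_r etens_act_etens tau_tens tens_mul mul1r.
  by rewrite -etens_sumr -tens_suml gen_unit_fr /lift_r etens_bal tau_tens
    lambda_mul_tens mulr1.
apply/ffunP => j; rewrite !ffunE.
under eq_bigr do rewrite lift_bimod (additive_fun_sum uD) sum_ffunE theta_suml.
under eq_bigr do under eq_bigr do rewrite u_act_r ffunE 2!thetaM theta_lambda theta_tens.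
rewrite exchange_big /= mulr_sumr mulr_suml; apply: eq_bigr => d _.
rewrite -mulr_sumr -theta_sumr; under eq_bigr do rewrite -mulrA.
by rewrite -!mulr_sumr gen_unit_f mulr1 theta_rlin mulrA.
Qed.

Lemma retr_r_bimod a b (w : {ffun 'I_m -> A}) :
  retr_r [ffun j => a * w j * f b] = lambda a * retr_r w * lambda (f b).
Proof.
have tens_bimod c : [ffun j => tens ([ffun j => a * w j * f b] j) (rs c)] =
    \sum_d [ffun j => lambda a * [ffun j => tens (w j) (rs d)] j
                      * tens (as_ d * f b) (rs c)].
  apply/ffunP => j; rewrite sum_ffunE !ffunE.
  under eq_bigr do rewrite !ffunE -mulrA tens_mul.
  rewrite -mulr_sumr -tens_suml -mulr_sumr gen_unit_fr.
  by rewrite lambda_mul_tens mulrA.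
rewrite /retr_r; under eq_bigr do rewrite tens_bimod (additive_fun_sum vD)
  (additive_fun_sum (drop_r_additive _)).
under eq_bigr do under eq_bigr do rewrite v_act_r drop_r_act theta_tens.
rewrite exchange_big /= mulr_sumr mulr_suml; apply: eq_bigr => d _.
rewrite -mulr_sumr -mulrA -drop_rMf; congr (_ * _).
by rewrite -(additive_fun_sum (drop_r_additive_l _)) -mulr_sumr gen_unit_f mulr1.
Qed.

End RightD2.

Lemma D2_descent : D2 lambda -> D2 f.
Proof.
case=> [ED2l ED2r]; split=> T t t_tensor.
- have [m [u [v [uD vD vuK uv_bimod]]]] := ED2r _ _ etens_is_tensor.
  exact: (summand_of_power_transfer (lft := f) (rgt := id)
    (sect_l_additive uD) (retr_l_additive vD) (retr_sect_l uD vuK uv_bimod)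
    (sect_l_bimod uD uv_bimod) (retr_l_bimod vD uv_bimod) t_tensor).
- have [m [u [v [uD vD vuK uv_bimod]]]] := ED2l _ _ etens_is_tensor.
  exact: (summand_of_power_transfer (lft := id) (rgt := f)
    (sect_r_additive uD) (retr_r_additive vD) (retr_sect_r uD vuK uv_bimod)
    (sect_r_bimod uD uv_bimod) (retr_r_bimod vD uv_bimod) t_tensor).
Qed.

End FrobeniusDescent.

Section FrobeniusData.
Variables (A B : pzRingType) (f : {rmorphism B -> A}).

Lemma frob_iso_form : frob_iso f ->
  exists Ef : A -> B,
    [/\ additive_fun Ef, forall x b, Ef (x * f b) = Ef x * b,
        forall x b, Ef (f b * x) = b * Ef x,
        forall a a', (forall z, Ef (a * z) = Ef (a' * z)) -> a = a' &
        forall phi, rlin_to_B f phi -> exists a, forall z, Ef (a * z) = phi z].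
Proof.
move=> [Phi [Phi_rlin _ PhiM Phi_inj Phi_onto]].
pose Ef := Phi 1.
have PhiE a x : Phi a x = Ef (a * x).
  by have := PhiM 1 1 a x; rewrite rmorph1 !mul1r.
have [Ef_additive EfMf] := Phi_rlin 1.
exists Ef; split=> //.
- by move=> x b; have := PhiM b 1 1 x; rewrite mulr1 mul1r !PhiE mulr1 mul1r.
- by move=> a a' eqa; apply: Phi_inj => x; rewrite !PhiE eqa.
- by move=> phi /Phi_onto[a Ha]; exists a => z; rewrite -PhiE Ha.
Qed.

Variable Ef : A -> B.
Hypothesis Ef_onto : forall phi, rlin_to_B f phi -> exists a, forall z, Ef (a * z) = phi z.

Lemma fg_projective_dual_basis : fg_projective f ->
  exists n (xs ys : 'I_n -> A), forall z, \sum_i xs i * f (Ef (ys i * z)) = z.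
Proof.
move=> [n [p [q [pD qD pMf qMf qpK]]]].
pose delta (i : 'I_n) : {ffun 'I_n -> B} := [ffun j => (j == i)%:R].
have delta_expansion (w : {ffun 'I_n -> B}) : \sum_i [ffun j => delta i j * w i] = w.
  apply/ffunP => j; rewrite sum_ffunE (bigD1 j) //= !ffunE eqxx mul1r big1 ?addr0 //.
  by move=> i /negbTE nij; rewrite !ffunE eq_sym nij mul0r.
have qE w : q w = \sum_i q (delta i) * f (w i).
  rewrite -{1}(delta_expansion w) (additive_fun_sum qD).
  by apply: eq_bigr => i _; rewrite qMf.
have [ys Hys] : exists ys : 'I_n -> A, forall i z, Ef (ys i * z) = p z i.
  apply: (@fin_all_exists _ (fun _ => A) (fun i y => forall z, Ef (y * z) = p z i)) => i.
  apply: Ef_onto; split=> [x y|x b]; first by rewrite pD ffunE.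
  by rewrite pMf ffunE.
exists n, (fun i => q (delta i)), ys => z.
by rewrite -{2}(qpK z) qE; apply: eq_bigr => i _; rewrite Hys.
Qed.

Lemma generator_dual_basis : generator f ->
  exists k (as_ rs : 'I_k -> A), \sum_c Ef (rs c * as_ c) = 1.
Proof.
move=> [k [p [q [pD qD pMf qMf qpK]]]].
pose single (c : 'I_k) (z : A) : {ffun 'I_k -> A} := [ffun j => if j == c then z else 0].
have [rs Hrs] : exists rs : 'I_k -> A, forall c z, Ef (rs c * z) = q (single c z).
  apply: (@fin_all_exists _ (fun _ => A) (fun c y => forall z, Ef (y * z) = q (single c z))) => c.
  apply: Ef_onto; split=> [x y|x b].
    rewrite -qD; congr (q _); apply/ffunP => j; rewrite !ffunE.
    by case: (j == c); rewrite ?addr0.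
  rewrite -qMf; congr (q _); apply/ffunP => j; rewrite !ffunE.
  by case: (j == c); rewrite ?mul0r.
exists k, (fun c => p 1 c), rs.
under eq_bigr do rewrite Hrs.
rewrite -(additive_fun_sum qD) -{2}(qpK 1); congr (q _).
apply/ffunP => j; rewrite sum_ffunE (bigD1 j) //= !ffunE eqxx big1 ?addr0 //.
by move=> c /negbTE ne; rewrite ffunE eq_sym ne.
Qed.

End FrobeniusData.

Lemma End_tau (A B E : pzRingType) (f : {rmorphism B -> A}) (theta : E -> A -> A)
    (Ef : A -> B) :
  additive_fun Ef -> (forall x b, Ef (x * f b) = Ef x * b) -> is_End f theta ->
  exists tau : A -> E, forall y z, theta (tau y) z = f (Ef (y * z)).
Proof.
move=> EfD EfMf [_ _ _ _ theta_onto].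
have tau_ex y : {e : E | forall z, theta e z = f (Ef (y * z))}.
  apply: constructive_indefinite_description; apply: theta_onto.
  split=> [x x'|x b]; first by rewrite mulrDr EfD rmorphD.
  by rewrite mulrA EfMf rmorphM.
by exists (fun y => sval (tau_ex y)) => y z; case: (tau_ex y).
Qed.

Theorem theorem5p7 (A B : pzRingType) (f : {rmorphism B -> A})
    (E : pzRingType) (theta : E -> A -> A) (lambda : {rmorphism A -> E}) :
  Frobenius f -> generator f ->
  is_End f theta -> (forall a x, theta (lambda a) x = a * x) ->
  D2 lambda -> D2 f.
Proof.
move=> [fgp /frob_iso_form[Ef [EfD EfMf EffM Ef_nondeg Ef_onto]]] gen theta_End.
have [n [xs [ys dual_basis]]] := fg_projective_dual_basis Ef_onto fgp.
have [k [as_ [rs gen_unit]]] := generator_dual_basis Ef_onto gen.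
have [tau theta_tau] := End_tau EfD EfMf theta_End.
case: theta_End => theta_rlin_endo thetaD [thetaM _] theta_inj _ theta_lambda.
have theta_additive e : additive_fun (theta e) by case: (theta_rlin_endo e).
have theta_rlin e : forall x b, theta e (x * f b) = theta e x * f b.
  by case: (theta_rlin_endo e).
exact: (D2_descent EfD EfMf EffM Ef_nondeg dual_basis theta_additive theta_rlin
  thetaD thetaM theta_inj theta_lambda theta_tau gen_unit).
Qed.
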